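(* Let $X$ take values in a finite set $\mathcal X$ with $\mathbb{P}(X=x)>0$ for all $x$, let $Y\in[M]$ ($M\ge 2$), $R\in\{0,1\}$, and let $F$ take values in a finite set $\mathcal F$. Assume $F$ is conditionally independent of $R$ given $(Y,X)$, $\mathbb{P}(R=1\mid Y=y,X=x)>0$ for all $x,y$, $\mathbb{P}(R=1,Y=y\mid X=x)>0$ for all $x,y$, and $\mathbb{P}(R=0\mid X=x)>0$ for all $x$. With $\alpha_x(f,y)=\mathbb{P}(R=1,F=f,Y=y\mid X=x)$, $\beta_x(f)=\mathbb{P}(R=0,F=f\mid X=x)$, $A_x=[\alpha_x(f,y)]_{f,y}=[\mathbf a_{x,1},\dots,\mathbf a_{x,M}]$ (columns $\mathbf a_{x,y}\in\mathbb{R}^{|\mathcal F|}$), $\boldsymbol\beta_x=(\beta_x(f))_f$, and $D=\mathrm{diag}(1,\dots,M)$, define \[\theta^{\mathrm{shad}}_{\max}=\sum_{x}\mathbb{P}(X=x)\max\{\mathbf 1^\top A_xD(\mathbf w+\mathbf 1):A_x\mathbf w=\boldsymbol\beta_x,\ \mathbf w\ge\mathbf 0\},\quad \theta^{\mathrm{shad}}_{\min}=\sum_{x}\mathbb{P}(X=x)\min\{\mathbf 1^\top A_xD(\mathbf w+\mathbf 1):A_x\mathbf w=\boldsymbol\beta_x,\ \mathbf w\ge\mathbf 0\},\] and $\theta_{\max}=\mathbb{E}[Y\mathbf 1\{R=1\}]+M\,\mathbb{P}(R=0)$, $\theta_{\min}=\mathbb{E}[Y\mathbf 1\{R=1\}]+\mathbb{P}(R=0)$.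 Then \[\theta_{\max}-\theta^{\mathrm{shad}}_{\max}\ \ge\ \sum_{x\in\mathcal X}\frac{\mathbf 1^\top\boldsymbol\beta_x}{2}\Big\|\frac{\boldsymbol\beta_x}{\mathbf 1^\top\boldsymbol\beta_x}-\frac{\mathbf a_{x,M}}{\mathbf 1^\top\mathbf a_{x,M}}\Big\|_1\mathbb{P}(X=x)\ \ge 0,\] \[\theta^{\mathrm{shad}}_{\min}-\theta_{\min}\ \ge\ \sum_{x\in\mathcal X}\frac{\mathbf 1^\top\boldsymbol\beta_x}{2}\Big\|\frac{\boldsymbol\beta_x}{\mathbf 1^\top\boldsymbol\beta_x}-\frac{\mathbf a_{x,1}}{\mathbf 1^\top\mathbf a_{x,1}}\Big\|_1\mathbb{P}(X=x)\ \ge 0.\]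
   Context: $[\theta_{\min},\theta_{\max}]$ is the identification interval for $\mathbb{E}[Y]$ under outcome-dependent missingness without using $F$; $[\theta^{\mathrm{shad}}_{\min},\theta^{\mathrm{shad}}_{\max}]$ is the identification interval when the auxiliary prediction $F$ (satisfying $F\perp R\mid Y,X$) is also observed. Note $\mathbf 1^\top\boldsymbol\beta_x=\mathbb{P}(R=0\mid X=x)$ and $\mathbf 1^\top\mathbf a_{x,y}=\mathbb{P}(R=1,Y=y\mid X=x)$. *)

From mathcomp Require Import all_boot all_order all_algebra.
From mathcomp Require Import classical_sets reals.
Set Implicit Arguments. Unset Strict Implicit. Unset Printing Implicit Defensive.
Import Order.TTheory GRing.Theory Num.Theory.
Local Open Scope ring_scope.
Local Open Scope classical_set_scope.

(* Joint pmf p x y r f = P(X=x, Y=y, R=r, F=f).  Y ranges over 'I_M, where the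
   ordinal y stands for the label (val y).+1 in [M] = {1,...,M}. R = true means R=1. *)
Section Defs.
Variables (R : realType) (Xt Ft : finType) (M : nat).
Variable p : Xt -> 'I_M -> bool -> Ft -> R.

Definition is_pmf := (forall x y r f, 0 <= p x y r f) /\
  \sum_x \sum_y \sum_r \sum_f p x y r f = 1.

Definition pX x := \sum_y \sum_r \sum_f p x y r f.
Definition pXY x y := \sum_r \sum_f p x y r f.
Definition pXYR x y r := \sum_f p x y r f.
Definition pXYF x y f := \sum_r p x y r f.
Definition pXR x r := \sum_y \sum_f p x y r f.

Definition cond_indep_F_R :=
  forall x y r f, p x y r f * pXY x y = pXYR x y r * pXYF x y f.

Definition alpha x f y := p x y true f / pX x.
Definition beta x f := (\sum_y p x y false f) / pX x.

Definition label (y : 'I_M) : R := (val y).+1%:R.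

Definition feasible x (w : 'I_M -> R) :=
  (forall y, 0 <= w y) /\ (forall f, \sum_y alpha x f y * w y = beta x f).

Definition shad_obj x (w : 'I_M -> R) :=
  \sum_f \sum_y alpha x f y * label y * (w y + 1).

Definition shad_values x := [set v | exists w, feasible x w /\ v = shad_obj x w].

Definition theta_shad_max := \sum_x pX x * sup (shad_values x).
Definition theta_shad_min := \sum_x pX x * inf (shad_values x).

Definition EY_R1 := \sum_x \sum_y \sum_f label y * p x y true f.
Definition PR0 := \sum_x pXR x false.

Definition theta_max := EY_R1 + M%:R * PR0.
Definition theta_min := EY_R1 + PR0.

Definition tv_term x y :=
  (\sum_f beta x f) / 2 *
  \sum_f `| beta x f / (\sum_g beta x g) - alpha x f y / (\sum_g alpha x g y) |.
End Defs.

Definition ord_first (M : nat) (h : (1 < M)%N) : 'I_M := Ordinal (ltnW h).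
Definition ord_last (M : nat) (h : (1 < M)%N) : 'I_M.
Proof. refine (@Ordinal M M.-1 _). by rewrite ltn_predL; exact: ltnW h. Defined.

(* Fix x and a feasible w, and put u_y := 1^T a_{x,y} w_y, so that 1^T beta_x = sum_y u_y.
   Comparing beta_x = sum_y a_{x,y} w_y entrywise with its share along the column a_{x,y0}
   bounds the total-variation term at y0 by sum_{y <> y0} u_y.  The objective is
   1^T A_x D 1 + sum_y y u_y, and sum_y (M - y) u_y >= sum_{y <> M} u_y (resp.
   sum_y (y - 1) u_y >= sum_{y <> 1} u_y), which bounds the sup (resp. inf) over the
   feasible set.  Weighting by P(X = x), 1^T A_x D 1 averages to E[Y 1{R=1}] and
   1^T beta_x to P(R = 0).  The feasible set is nonempty: by the conditional independence
   the odds w_y = P(R=0 | x,y) / P(R=1 | x,y) solve A_x w = beta_x. *)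
From mathcomp Require Import all_boot all_order all_algebra.
From mathcomp Require Import classical_sets reals.
From mathcomp Require Import ring lra zify.
Import Order.TTheory GRing.Theory Num.Theory.
Local Open Scope ring_scope.

Lemma l1_dist_mixture_column_le (R : realFieldType) (Ft I : finType)
    (a : Ft -> I -> R) (b : Ft -> R) (w : I -> R) (y0 : I) :
  (forall f y, 0 <= a f y) -> (forall y, 0 <= w y) ->
  (forall f, b f = \sum_y a f y * w y) ->
  0 < \sum_f a f y0 -> 0 < \sum_f b f ->
  (\sum_f b f) * \sum_f `| b f / (\sum_g b g) - a f y0 / (\sum_g a g y0) |
    <= 2 * \sum_(y | y != y0) (\sum_f a f y) * w y.
Proof.
move=> a_ge0 w_ge0 bE a0_gt0 b_gt0.
set s := fun y => \sum_f a f y; rewrite -/(s y0).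
set sb := \sum_f b f.
have sbE : sb = \sum_y s y * w y.
  rewrite /sb (eq_bigr _ (fun f _ => bE f)) exchange_big /=.
  by apply: eq_bigr => y _; rewrite mulr_suml.
have s0_neq0 : s y0 != 0 by rewrite gt_eqF.
have sb_neq0 : sb != 0 by rewrite gt_eqF.
have s_ge0 y : 0 <= s y by apply: sumr_ge0.
(* b_f - sb * a_{f,y0} / s_{y0} only involves the columns y <> y0 *)
have entry_le f : sb * `|b f / sb - a f y0 / s y0| <=
    \sum_(y | y != y0) (a f y * w y + s y * w y * (a f y0 / s y0)).
  rewrite -[X in X * _]ger0_norm ?(ltW b_gt0) // -normrM mulrBr.
  have -> : sb * (b f / sb) = b f by field.
  have -> : b f - sb * (a f y0 / s y0) =
      \sum_(y | y != y0) (a f y * w y - s y * w y * (a f y0 / s y0)).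
    rewrite bE sbE mulr_suml -sumrB (bigD1 y0) //=.
    have -> : a f y0 * w y0 - s y0 * w y0 * (a f y0 / s y0) = 0 by field.
    by rewrite add0r.
  apply: le_trans (ler_norm_sum _ _ _) _; apply: ler_sum => y _.
  apply: le_trans (ler_normD _ _) _.
  rewrite normrN !ger0_norm ?mulr_ge0 ?divr_ge0 ?invr_ge0 ?(ltW a0_gt0) //.
rewrite [leLHS]mulr_sumr; apply: le_trans (ler_sum _ (fun f _ => entry_le f)) _.
rewrite exchange_big /= mulr_sumr; apply: ler_sum => y _.
rewrite big_split /= -mulr_suml -mulr_sumr -mulr_suml -/(s y) divff // mulr1.
lra.
Qed.

Lemma sum_off_le_weighted_sum (R : realDomainType) (I : finType)
    (c u : I -> R) (y0 : I) :
  (forall y, 0 <= u y) -> c y0 = 0 -> (forall y, y != y0 -> 1 <= c y) ->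
  \sum_(y | y != y0) u y <= \sum_y c y * u y.
Proof.
move=> u_ge0 c0 c_ge1.
rewrite [X in _ <= X](bigD1 y0) //= c0 mul0r add0r.
by apply: ler_sum => y /c_ge1 ?; rewrite -[leLHS]mul1r ler_wpM2r.
Qed.

Section Labels.
Variables (R : realType) (M : nat) (hM : (1 < M)%N).

Lemma label_ord_last : label R (ord_last hM) = M%:R.
Proof. by rewrite /label /= prednK // ltnW. Qed.

Lemma label_ord_first : label R (ord_first hM) = 1.
Proof. by []. Qed.

Lemma label_lt_last (y : 'I_M) : y != ord_last hM -> 1 <= M%:R - label R y.
Proof.
move=> y_neq.
have y_lt : ((val y).+2 <= M)%N.
  have : val y != M.-1 by apply: contra y_neq => /eqP ?; apply/eqP/val_inj.
  by case: y {y_neq} => m /= m_lt; lia.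
by rewrite lerBrDr /label addrC natr1 ler_nat.
Qed.

Lemma label_gt_first (y : 'I_M) : y != ord_first hM -> 1 <= label R y - 1.
Proof.
move=> y_neq; rewrite lerBrDr /label -[1 + 1]/(2%:R) ler_nat ltnS lt0n.
by apply: contra y_neq => /eqP ?; apply/eqP/val_inj.
Qed.
End Labels.

Definition missing_odds {R : realType} {Xt Ft : finType} {M : nat}
  (p : Xt -> 'I_M -> bool -> Ft -> R) x y := pXYR p x y false / pXYR p x y true.

Section Fiber.
Context {R : realType} {Xt Ft : finType} {M : nat}.
Context {p : Xt -> 'I_M -> bool -> Ft -> R}.
Hypothesis p_ge0 : forall x y r f, 0 <= p x y r f.
Context {x : Xt}.
Hypothesis pX_gt0 : 0 < pX p x.

Lemma alpha_ge0 f y : 0 <= alpha p x f y.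
Proof. exact/divr_ge0/ltW. Qed.

Lemma feasible_sum_beta {w} : feasible p x w ->
  \sum_f beta p x f = \sum_y (\sum_f alpha p x f y) * w y.
Proof.
move=> [_ Aw]; rewrite (eq_bigr _ (fun f _ => esym (Aw f))) exchange_big /=.
by apply: eq_bigr => y _; rewrite mulr_suml.
Qed.

Lemma shad_objE w : shad_obj p x w = \sum_f \sum_y alpha p x f y * label R y +
  \sum_y label R y * ((\sum_f alpha p x f y) * w y).
Proof.
rewrite /shad_obj exchange_big [X in _ = X + _]exchange_big /= -big_split.
apply: eq_bigr => y _ /=.
by rewrite mulr_suml mulr_sumr -big_split; apply: eq_bigr => f _ /=; ring.
Qed.

Lemma tv_term_le_off_column {w y0} :
  0 < \sum_f alpha p x f y0 -> 0 < \sum_f beta p x f -> feasible p x w ->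
  tv_term p x y0 <= \sum_(y | y != y0) (\sum_f alpha p x f y) * w y.
Proof.
move=> a_gt0 b_gt0 [w_ge0 Aw].
have := @l1_dist_mixture_column_le _ _ _ _ _ _ y0 alpha_ge0 w_ge0
  (fun f => esym (Aw f)) a_gt0 b_gt0.
rewrite /tv_term; lra.
Qed.

Lemma feasible_mass_ge0 {w} y : feasible p x w -> 0 <= (\sum_f alpha p x f y) * w y.
Proof. by case=> w_ge0 _; rewrite mulr_ge0 ?sumr_ge0 // => f _; apply: alpha_ge0. Qed.

Lemma shad_obj_le (hM : (1 < M)%N) w :
  0 < \sum_f alpha p x f (ord_last hM) -> 0 < \sum_f beta p x f -> feasible p x w ->
  shad_obj p x w <= \sum_f \sum_y alpha p x f y * label R y +
    M%:R * \sum_f beta p x f - tv_term p x (ord_last hM).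
Proof.
move=> a_gt0 b_gt0 fw.
have tv_le := tv_term_le_off_column a_gt0 b_gt0 fw.
have := @sum_off_le_weighted_sum _ _ (fun y => M%:R - label R y) _ (ord_last hM)
  (fun y => feasible_mass_ge0 y fw).
rewrite label_ord_last subrr => /(_ erefl (@label_lt_last R M hM)).
under [X in _ <= X]eq_bigr => y _ do rewrite mulrBl.
rewrite sumrB -mulr_sumr shad_objE (feasible_sum_beta fw); lra.
Qed.

Lemma shad_obj_ge (hM : (1 < M)%N) w :
  0 < \sum_f alpha p x f (ord_first hM) -> 0 < \sum_f beta p x f -> feasible p x w ->
  \sum_f \sum_y alpha p x f y * label R y +
    \sum_f beta p x f + tv_term p x (ord_first hM) <= shad_obj p x w.
Proof.
move=> a_gt0 b_gt0 fw.
have tv_le := tv_term_le_off_column a_gt0 b_gt0 fw.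
have := @sum_off_le_weighted_sum _ _ (fun y => label R y - 1) _ (ord_first hM)
  (fun y => feasible_mass_ge0 y fw).
rewrite label_ord_first subrr => /(_ erefl (@label_gt_first R M hM)).
under [X in _ <= X]eq_bigr => y _ do rewrite mulrBl mul1r.
rewrite sumrB shad_objE (feasible_sum_beta fw); lra.
Qed.

Lemma sup_shad_values_le (hM : (1 < M)%N) :
  (shad_values p x !=set0)%classic ->
  0 < \sum_f alpha p x f (ord_last hM) -> 0 < \sum_f beta p x f ->
  sup (shad_values p x) <= \sum_f \sum_y alpha p x f y * label R y +
    M%:R * \sum_f beta p x f - tv_term p x (ord_last hM).
Proof.
move=> values_neq0 a_gt0 b_gt0; apply: ge_sup => // _ [w [fw ->]].
exact: shad_obj_le.
Qed.

Lemma inf_shad_values_ge (hM : (1 < M)%N) :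
  (shad_values p x !=set0)%classic ->
  0 < \sum_f alpha p x f (ord_first hM) -> 0 < \sum_f beta p x f ->
  \sum_f \sum_y alpha p x f y * label R y +
    \sum_f beta p x f + tv_term p x (ord_first hM) <= inf (shad_values p x).
Proof.
move=> values_neq0 a_gt0 b_gt0; apply: lb_le_inf => // _ [w [fw ->]].
exact: shad_obj_ge.
Qed.

Lemma cond_indep_cross y f : cond_indep_F_R p -> 0 < pXY p x y ->
  p x y true f * pXYR p x y false = p x y false f * pXYR p x y true.
Proof.
move=> ci pXY_gt0; apply/(mulIf (lt0r_neq0 pXY_gt0)).
by rewrite mulrAC ci [RHS]mulrAC ci; ring.
Qed.

Lemma feasible_missing_odds : cond_indep_F_R p ->
  (forall y, 0 < pXYR p x y true / pX p x) -> feasible p x (missing_odds p x).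
Proof.
move=> ci pR1_gt0.
have pXYR1_gt0 y : 0 < pXYR p x y true.
  by have := pR1_gt0 y; rewrite pmulr_lgt0 // invr_gt0.
have pXYR0_ge0 y : 0 <= pXYR p x y false by rewrite /pXYR sumr_ge0.
split=> [y|f]; first by rewrite /missing_odds divr_ge0 ?(ltW (pXYR1_gt0 y)).
rewrite /beta mulr_suml; apply: eq_bigr => y _.
have pXY_gt0 : 0 < pXY p x y.
  by have := pXYR1_gt0 y; have := pXYR0_ge0 y; rewrite /pXYR /pXY big_bool /=; lra.
have [pX_neq0 pXYR1_neq0] := (lt0r_neq0 pX_gt0, lt0r_neq0 (pXYR1_gt0 y)).
have -> : p x y false f = p x y true f * pXYR p x y false / pXYR p x y true.
  by rewrite (cond_indep_cross y f ci pXY_gt0) mulfK.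
by rewrite /alpha /missing_odds; field; apply/andP.
Qed.

End Fiber.

Section Marginals.
Context {R : realType} {Xt Ft : finType} {M : nat}.
Variable p : Xt -> 'I_M -> bool -> Ft -> R.
Hypothesis pX_neq0 : forall x, pX p x != 0.

Lemma EY_R1E : EY_R1 p = \sum_x pX p x * \sum_f \sum_y alpha p x f y * label R y.
Proof.
apply: eq_bigr => x _; rewrite mulr_sumr.
under [RHS]eq_bigr => f _ do rewrite mulr_sumr.
rewrite [RHS]exchange_big /=; apply: eq_bigr => y _; apply: eq_bigr => f _.
by rewrite /alpha; field; apply: pX_neq0.
Qed.

Lemma PR0E : PR0 p = \sum_x pX p x * \sum_f beta p x f.
Proof.
apply: eq_bigr => x _; rewrite /beta -mulr_suml /pXR exchange_big /=.
by field; apply: pX_neq0.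
Qed.

End Marginals.

Theorem theorem1 (R : realType) (Xt Ft : finType) (M : nat) (hM : (1 < M)%N)
  (p : Xt -> 'I_M -> bool -> Ft -> R) :
  is_pmf p ->
  (forall x, 0 < pX p x) ->
  cond_indep_F_R p ->
  (forall x y, 0 < pXYR p x y true / pXY p x y) ->
  (forall x y, 0 < pXYR p x y true / pX p x) ->
  (forall x, 0 < pXR p x false / pX p x) ->
  (theta_max p - theta_shad_max p >=
     \sum_x tv_term p x (ord_last hM) * pX p x /\
   \sum_x tv_term p x (ord_last hM) * pX p x >= 0) /\
  (theta_shad_min p - theta_min p >=
     \sum_x tv_term p x (ord_first hM) * pX p x /\
   \sum_x tv_term p x (ord_first hM) * pX p x >= 0).
Proof.
move=> [p_ge0 _] pX_gt0 ci _ pR1_gt0 pR0_gt0.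
have pX_neq0 x : pX p x != 0 by rewrite gt_eqF.
have a_gt0 x y : 0 < \sum_f alpha p x f y by rewrite -mulr_suml; apply: pR1_gt0.
have b_gt0 x : 0 < \sum_f beta p x f by rewrite -mulr_suml exchange_big; apply: pR0_gt0.
have values_neq0 x : (shad_values p x !=set0)%classic.
  by exists (shad_obj p x (missing_odds p x)), (missing_odds p x);
    split=> //; apply: feasible_missing_odds => //; apply: pR1_gt0.
have tv_ge0 y0 : 0 <= \sum_x tv_term p x y0 * pX p x.
  apply: sumr_ge0 => x _; rewrite mulr_ge0 ?(ltW (pX_gt0 x)) // mulr_ge0 ?divr_ge0 //.
  - exact: ltW (b_gt0 x).
  - by apply: sumr_ge0 => f _.
split; split=> //.
- rewrite /theta_max /theta_shad_max EY_R1E // PR0E // mulr_sumr -big_split -sumrB.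
  apply: ler_sum => x _ /=.
  have := ler_wpM2l (ltW (pX_gt0 x))
    (sup_shad_values_le p_ge0 (pX_gt0 x) hM (values_neq0 x) (a_gt0 x _) (b_gt0 x)).
  by have := pX_gt0 x; nra.
- rewrite /theta_min /theta_shad_min EY_R1E // PR0E // -big_split -sumrB.
  apply: ler_sum => x _ /=.
  have := ler_wpM2l (ltW (pX_gt0 x))
    (inf_shad_values_ge p_ge0 (pX_gt0 x) hM (values_neq0 x) (a_gt0 x _) (b_gt0 x)).
  by have := pX_gt0 x; nra.
Qed.
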